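(* Let $d\ge3$ and consider the two-link parallel network with unit demand and latencies $\ell_1(x_1)=x_1^d$ and $\ell_2(x_2)=\left(\frac{d-1}{d}\right)^d$ (constant). Then $\mathcal{T}(c)\ne\emptyset$ if and only if $c\le\left(\frac{d-1}{d}\right)^{d-1}$; for such $c$, $\mathcal{T}(c)=\{(c,c)\}$ and the induced flow is $x(c)=x(0)=\left(\frac{d-1}{d},\frac1d\right)$. With the convention that $\sup_{t\in\emptyset}C(x(t))=\infty$, it follows that $$\inf_{c\in\mathbb{R}_+}\ \sup_{t\in\mathcal{T}(c)}\frac{C(x(t))}{C(x^* )}=\frac{(d+1)^{(d+1)/d}}{(d+1)^{(d+1)/d}-(d-1)},$$ where $x^*=\left(\frac{d-1}{d(d+1)^{1/d}},\,1-\frac{d-1}{d(d+1)^{1/d}}\right)$ is the optimal flow; this quantity tends to $\infty$ as $d\to\infty$.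
   Context: Flows $x\in\mathbb{R}^2_+$ with $x_1+x_2=1$; $C(x)=\sum_i\ell_i(x_i)x_i$; $x^*$ minimizes $C$. For tolls $t\in\mathbb{R}^2_+$, $x(t)$ is the unique Wardrop equilibrium for $t$ (for all $i,j$ with $x_i>0$: $\ell_i(x_i)+t_i\le\ell_j(x_j)+t_j$); $x(0)$ is the untolled one. Profit $\Pi_i(t)=t_ix_i(t)$. For $c\in\mathbb{R}_+$, $\mathcal{T}(c)$ is the set of toll vectors with $0\le t_i\le c$ such that for every $i$ and every $t'_i\in[0,c]$, $\Pi_i(t_i,t_{-i})\ge\Pi_i(t'_i,t_{-i})$ (flow recomputed as the Wardrop equilibrium). *)

From Stdlib Require Import Reals Lra ClassicalEpsilon.
Open Scope R_scope.

Definition flow := (R * R)%type.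
Definition tolls := (R * R)%type.

Definition Feasible (x : flow) : Prop :=
  0 <= fst x /\ 0 <= snd x /\ fst x + snd x = 1.

(** Wardrop equilibrium for tolls t (the cases i = j are trivial). *)
Definition IsWE (l1 l2 : R -> R) (t : tolls) (x : flow) : Prop :=
  Feasible x /\
  (0 < fst x -> l1 (fst x) + fst t <= l2 (snd x) + snd t) /\
  (0 < snd x -> l2 (snd x) + snd t <= l1 (fst x) + fst t).

(** x(t): "the" Wardrop equilibrium for t (Hilbert choice; it is unique). *)
Definition xflow (l1 l2 : R -> R) (t : tolls) : flow :=
  epsilon (inhabits (0, 0)) (IsWE l1 l2 t).

Definition Profit1 (l1 l2 : R -> R) (t : tolls) : R := fst t * fst (xflow l1 l2 t).
Definition Profit2 (l1 l2 : R -> R) (t : tolls) : R := snd t * snd (xflow l1 l2 t).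

Definition InT (l1 l2 : R -> R) (c : R) (t : tolls) : Prop :=
  (0 <= fst t <= c) /\ (0 <= snd t <= c) /\
  (forall t1', 0 <= t1' <= c -> Profit1 l1 l2 (t1', snd t) <= Profit1 l1 l2 t) /\
  (forall t2', 0 <= t2' <= c -> Profit2 l1 l2 (fst t, t2') <= Profit2 l1 l2 t).

Definition Cost (l1 l2 : R -> R) (x : flow) : R :=
  l1 (fst x) * fst x + l2 (snd x) * snd x.
Definition IsOpt (l1 l2 : R -> R) (x : flow) : Prop :=
  Feasible x /\ forall y, Feasible y -> Cost l1 l2 x <= Cost l1 l2 y.

Definition lat1 (d : nat) (x : R) : R := x ^ d.
Definition lat2 (d : nat) (_ : R) : R := ((INR d - 1) / INR d) ^ d.

(** Extended-real sup/inf, with sup over the empty set = +infinity.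
    [SupLe P f W] means  sup_{t | P t} f t <= W  (false if P is empty). *)
Definition SupLe (P : tolls -> Prop) (f : tolls -> R) (W : R) : Prop :=
  (exists t, P t) /\ forall t, P t -> f t <= W.

(** [IsInfSup P f V] means  inf_{c >= 0} sup_{t | P c t} f t = V  (V finite). *)
Definition IsInfSup (P : R -> tolls -> Prop) (f : tolls -> R) (V : R) : Prop :=
  (forall c, 0 <= c -> forall W, SupLe (P c) f W -> V <= W) /\
  (forall W, V < W -> exists c, 0 <= c /\ SupLe (P c) f W).

From Stdlib Require Import Reals Lra Psatz ClassicalEpsilon.
From Coquelicot Require Import Coquelicot.
Open Scope R_scope.

(* Write a = (d-1)/d and K = a^d.  At equal tolls (t, t) the equilibrium flow is (a, 1 - a) and every
   user pays K, so C(x(t)) = K whatever t.  Conversely, at a pair of mutual best responses each link's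
   profit, seen as a function of the flow it attracts, has a one-sided maximum; the resulting first-order
   inequalities, together with the option of link 2 to undercut link 1 and carry the whole demand, leave
   only t1 = t2 = c, x = (a, 1 - a) and c <= a^(d-1).  That (c, c) is then indeed a best-response pair,
   and that x^* is the unique optimum, both follow from the tangent-line inequality for y |-> y^n.
   Finally the ratio of K to the optimal cost is explicit and at least sqrt d / 6, because
   (d+1)^(1/d) <= 1 + 2 / sqrt d. *)

Lemma pow_lt_compat_l n x y : 0 <= x < y -> (1 <= n)%nat -> x ^ n < y ^ n.
Proof.
  intros [Hx Hxy] Hn. induction n as [|n IH]; [lia|].
  destruct n as [|n]; [simpl; lra|].
  specialize (IH ltac:(lia)).
  assert (0 <= x ^ S n) by (apply pow_le; lra).
  rewrite <- !(tech_pow_Rmult _ (S n)). apply Rmult_le_0_lt_compat; lra.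
Qed.

(* The gap g_n = x^n - y^n - n y^(n-1) (x - y) satisfies g_(n+1) = x g_n + n y^(n-1) (x - y)^2. *)
Lemma pow_tangent_lt k x y : 0 <= x -> 0 <= y -> x <> y ->
  y ^ S (S k) + INR (S (S k)) * y ^ S k * (x - y) < x ^ S (S k).
Proof.
  intros Hx Hy Hxy. induction k as [|k IH].
  - simpl. assert (0 < (x - y) * (x - y)) by (apply Rsqr_pos_lt; lra). lra.
  - assert (Hstep : x ^ S (S (S k)) - y ^ S (S (S k)) - INR (S (S (S k))) * y ^ S (S k) * (x - y)
      = x * (x ^ S (S k) - y ^ S (S k) - INR (S (S k)) * y ^ S k * (x - y))
        + INR (S (S k)) * y ^ S k * ((x - y) * (x - y))).
    { rewrite (S_INR (S (S k))). simpl pow. ring. }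
    assert (0 <= INR (S (S k)) * y ^ S k) by (apply Rmult_le_pos; [apply pos_INR | apply pow_le; lra]).
    assert (0 < (x - y) * (x - y)) by (apply Rsqr_pos_lt; lra).
    destruct (Req_dec x 0) as [->|Hx0].
    + assert (0 < INR (S (S k)) * y ^ S k).
      { apply Rmult_lt_0_compat; [apply lt_0_INR; lia | apply pow_lt; lra]. }
      assert (0 < INR (S (S k)) * y ^ S k * ((0 - y) * (0 - y))) by (apply Rmult_lt_0_compat; lra).
      lra.
    + assert (0 < x * (x ^ S (S k) - y ^ S (S k) - INR (S (S k)) * y ^ S k * (x - y))).
      { apply Rmult_lt_0_compat; lra. }
      assert (0 <= INR (S (S k)) * y ^ S k * ((x - y) * (x - y))) by (apply Rmult_le_pos; lra).
      lra.
Qed.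

Lemma pow_tangent_le k x y : 0 <= x -> 0 <= y ->
  y ^ S k + INR (S k) * y ^ k * (x - y) <= x ^ S k.
Proof.
  intros Hx Hy. destruct k as [|k]; [simpl; lra|].
  destruct (Req_dec x y) as [->|Hxy]; [lra|].
  left; apply pow_tangent_lt; auto.
Qed.

Lemma pow_sub_le_unit n w v : 0 <= w <= v -> v <= 1 -> v ^ n - w ^ n <= INR n * (v - w).
Proof.
  intros Hwv Hv. destruct n as [|n]; [simpl; lra|].
  pose proof (pow_tangent_le n w v ltac:(lra) ltac:(lra)).
  assert (v ^ n <= 1) by (rewrite <- (pow1 n); apply pow_incr; lra).
  assert (INR (S n) * v ^ n * (v - w) <= INR (S n) * (v - w)).
  { rewrite Rmult_assoc. apply Rmult_le_compat_l; [apply pos_INR|].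
    rewrite <- (Rmult_1_l (v - w)) at 2. apply Rmult_le_compat_r; lra. }
  lra.
Qed.

Lemma pow_mul_one_sub_le m y : 0 <= y ->
  y ^ m * (1 - y) <= (INR m / (INR m + 1)) ^ m * (1 - INR m / (INR m + 1)).
Proof.
  intros Hy. destruct m as [|k]; [simpl; lra|].
  set (M := INR (S k)) in *. set (a := M / (M + 1)).
  assert (HM : 0 < M) by (apply lt_0_INR; lia).
  assert (Ha1 : 0 < 1 - a).
  { unfold a. replace (1 - M / (M + 1)) with (/ (M + 1)) by (field; lra).
    apply Rinv_0_lt_compat; lra. }
  pose proof (pow_tangent_le k a y) as Ht.
  assert (0 <= a) by (unfold a; apply Rlt_le, Rdiv_lt_0_compat; lra).
  specialize (Ht ltac:(lra) Hy). fold M in Ht.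
  assert (Hgap : (y ^ S k + M * y ^ k * (a - y)) * (1 - a) - y ^ S k * (1 - y)
                 = y ^ k * ((a - y) * (a - y))).
  { change (y ^ S k) with (y * y ^ k). unfold a. field. lra. }
  assert (0 <= y ^ k * ((a - y) * (a - y))) by (apply Rmult_le_pos; [apply pow_le; lra | apply Rle_0_sqr]).
  assert ((y ^ S k + M * y ^ k * (a - y)) * (1 - a) <= a ^ S k * (1 - a)) by (apply Rmult_le_compat_r; lra).
  lra.
Qed.

Lemma pow_step_bounds n w v e : (1 <= n)%nat -> 0 <= w <= v -> v <= 1 ->
  v - w < e / INR n -> 0 <= v ^ n - w ^ n < e.
Proof.
  intros Hn Hwv Hv Hstep.
  assert (HN : 0 < INR n) by (apply lt_0_INR; lia).
  pose proof (pow_incr w v n Hwv). pose proof (pow_sub_le_unit n w v Hwv Hv).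
  assert (INR n * (v - w) < e).
  { apply (Rmult_lt_compat_l (INR n)) in Hstep; [|exact HN].
    replace (INR n * (e / INR n)) with e in Hstep by (field; lra). exact Hstep. }
  lra.
Qed.

Lemma difference_quotient_sign f x l : derivable_pt_lim f x l -> l <> 0 ->
  exists del, 0 < del /\
    forall h, h <> 0 -> Rabs h < del -> 0 < (f (x + h) - f x) / h * l.
Proof.
  intros Hd Hl.
  assert (Habs : 0 < Rabs l / 2) by (pose proof (Rabs_pos_lt l Hl); lra).
  destruct (Hd _ Habs) as [del Hdel].
  exists del; split; [apply cond_pos|]. intros h Hh0 Hh.
  specialize (Hdel h Hh0 Hh). apply Rabs_def2 in Hdel.
  destruct (Rle_dec 0 l); [rewrite Rabs_right in Hdel by lra | rewrite Rabs_left in Hdel by lra];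
    destruct Hdel; nra.
Qed.

Lemma derive_nonpos_of_right_max f x l e : derivable_pt_lim f x l -> 0 < e ->
  (forall h, 0 < h < e -> f (x + h) <= f x) -> l <= 0.
Proof.
  intros Hd He Hmax. destruct (Rle_dec l 0) as [|Hl]; [assumption|]. exfalso.
  destruct (difference_quotient_sign f x l Hd ltac:(lra)) as [del [Hdel Hq]].
  set (h := Rmin e del / 2).
  assert (Hh : 0 < h < Rmin e del) by (pose proof (Rmin_glb_lt e del 0 He Hdel); unfold h; lra).
  pose proof (Rmin_l e del). pose proof (Rmin_r e del).
  specialize (Hq h ltac:(lra) ltac:(rewrite Rabs_right; lra)).
  specialize (Hmax h ltac:(lra)).
  assert (0 < (f (x + h) - f x) / h) by (apply (Rmult_lt_reg_r l); lra).
  assert (0 < (f (x + h) - f x) / h * h) by (apply Rmult_lt_0_compat; lra).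
  replace ((f (x + h) - f x) / h * h) with (f (x + h) - f x) in * by (field; lra).
  lra.
Qed.

Lemma derive_nonneg_of_left_max f x l e : derivable_pt_lim f x l -> 0 < e ->
  (forall h, 0 < h < e -> f (x - h) <= f x) -> 0 <= l.
Proof.
  intros Hd He Hmax. destruct (Rle_dec 0 l) as [|Hl]; [assumption|]. exfalso.
  destruct (difference_quotient_sign f x l Hd ltac:(lra)) as [del [Hdel Hq]].
  set (h := Rmin e del / 2).
  assert (Hh : 0 < h < Rmin e del) by (pose proof (Rmin_glb_lt e del 0 He Hdel); unfold h; lra).
  pose proof (Rmin_l e del). pose proof (Rmin_r e del).
  specialize (Hq (- h) ltac:(lra) ltac:(rewrite Rabs_Ropp, Rabs_right; lra)).
  specialize (Hmax h ltac:(lra)).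
  replace (x + - h) with (x - h) in Hq by ring.
  assert ((f (x - h) - f x) / - h < 0) by (apply (Rmult_lt_reg_r (- l)); lra).
  assert (0 < (f (x - h) - f x) / - h * - h) by nra.
  replace ((f (x - h) - f x) / - h * - h) with (f (x - h) - f x) in * by (field; lra).
  lra.
Qed.

Lemma pow_pred_mul n x : (1 <= n)%nat -> x ^ pred n * x = x ^ n.
Proof. intros Hn. destruct n as [|n]; [lia|]. simpl. ring. Qed.

Lemma ratio_facts d : (3 <= d)%nat ->
  3 <= INR d /\ 0 < (INR d - 1) / INR d < 1 /\ INR d * (1 - (INR d - 1) / INR d) = 1.
Proof.
  intros Hd. assert (HD : 3 <= INR d) by (pose proof (le_INR 3 d Hd); simpl in *; lra).
  split; [exact HD|]. split; [split|].
  - apply Rdiv_lt_0_compat; lra.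
  - replace ((INR d - 1) / INR d) with (1 - / INR d) by (field; lra).
    pose proof (Rinv_0_lt_compat (INR d) ltac:(lra)); lra.
  - field; lra.
Qed.

Section Equilibrium.

Variable d : nat.
Hypothesis d_pos : (1 <= d)%nat.

Local Notation a := ((INR d - 1) / INR d).
Local Notation K := (a ^ d).
Local Notation xf := (xflow (lat1 d) (lat2 d)).

Let D_ge1 : 1 <= INR d.
Proof. apply (le_INR 1). exact d_pos. Qed.

Lemma IsWE_unique t x y :
  IsWE (lat1 d) (lat2 d) t x -> IsWE (lat1 d) (lat2 d) t y -> x = y.
Proof.
  intros [[Hx1 [Hx2 Hx]] [Hx3 Hx4]] [[Hy1 [Hy2 Hy]] [Hy3 Hy4]].
  destruct x as [x1 x2], y as [y1 y2]; unfold lat1, lat2 in *; simpl in *.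
  enough (x1 = y1) by (f_equal; lra).
  destruct (Rtotal_order x1 y1) as [Hl|[He|Hg]]; [exfalso| assumption |exfalso].
  - pose proof (pow_lt_compat_l d x1 y1 ltac:(lra) d_pos).
    specialize (Hy3 ltac:(lra)); specialize (Hx4 ltac:(lra)); lra.
  - pose proof (pow_lt_compat_l d y1 x1 ltac:(lra) d_pos).
    specialize (Hx3 ltac:(lra)); specialize (Hy4 ltac:(lra)); lra.
Qed.

Lemma IsWE_interior t v : 0 < v < 1 -> v ^ d + fst t = K + snd t ->
  IsWE (lat1 d) (lat2 d) t (v, 1 - v).
Proof. intros Hv He. unfold IsWE, Feasible, lat1, lat2; simpl; repeat split; intros; lra. Qed.

Lemma IsWE_link2_only t : K + snd t <= fst t -> IsWE (lat1 d) (lat2 d) t (0, 1).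
Proof.
  intros H. unfold IsWE, Feasible, lat1, lat2; simpl.
  rewrite pow_i by lia. repeat split; intros; lra.
Qed.

Lemma IsWE_link1_only t : 1 + fst t <= K + snd t -> IsWE (lat1 d) (lat2 d) t (1, 0).
Proof.
  intros H. unfold IsWE, Feasible, lat1, lat2; simpl.
  rewrite pow1. repeat split; intros; lra.
Qed.

Lemma IsWE_exists t : exists x, IsWE (lat1 d) (lat2 d) t x.
Proof.
  destruct t as [t1 t2]. set (s := K + t2 - t1).
  destruct (Rle_dec s 0); [exists (0, 1); apply IsWE_link2_only; simpl; unfold s in *; lra|].
  destruct (Rle_dec 1 s); [exists (1, 0); apply IsWE_link1_only; simpl; unfold s in *; lra|].
  set (v := Rpower s (/ INR d)).
  assert (Hv0 : 0 < v) by apply exp_pos.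
  assert (Hvd : v ^ d = s).
  { unfold v. rewrite <- Rpower_pow by exact Hv0. rewrite Rpower_mult.
    rewrite Rinv_l by lra. apply Rpower_1; lra. }
  assert (Hv1 : v < 1).
  { destruct (Rlt_dec v 1) as [|Hv%Rnot_lt_le]; [assumption|].
    pose proof (pow_incr 1 v d ltac:(lra)). rewrite pow1 in *. lra. }
  exists (v, 1 - v). apply IsWE_interior; simpl; unfold s in Hvd; lra.
Qed.

Lemma xflow_IsWE t : IsWE (lat1 d) (lat2 d) t (xf t).
Proof. unfold xflow. apply epsilon_spec, IsWE_exists. Qed.

Lemma xflow_eq t x : IsWE (lat1 d) (lat2 d) t x -> xf t = x.
Proof. intros H. apply (IsWE_unique t); [apply xflow_IsWE | exact H]. Qed.

Lemma xflow_interior t v : 0 < v < 1 -> v ^ d + fst t = K + snd t -> xf t = (v, 1 - v).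
Proof. intros. apply xflow_eq, IsWE_interior; assumption. Qed.

Lemma xflow_feasible t : Feasible (xf t).
Proof. apply xflow_IsWE. Qed.

Lemma xflow_fst_pos t : fst t < K + snd t -> 0 < fst (xf t).
Proof.
  intros H. generalize (xflow_IsWE t); generalize (xf t) as x.
  intros [x1 x2] [[H1 [H2 H3]] [_ H4]]; unfold lat1, lat2 in *; simpl in *.
  destruct H1 as [|<-]; [assumption|]. exfalso.
  specialize (H4 ltac:(lra)). rewrite pow_i in H4 by lia. lra.
Qed.

Lemma xflow_snd_pos t : K + snd t < 1 + fst t -> 0 < snd (xf t).
Proof.
  intros H. generalize (xflow_IsWE t); generalize (xf t) as x.
  intros [x1 x2] [[H1 [H2 H3]] [H4 _]]; unfold lat1, lat2 in *; simpl in *.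
  destruct H2 as [|<-]; [assumption|]. exfalso.
  replace x1 with 1 in H4 by lra. rewrite pow1 in H4. specialize (H4 ltac:(lra)). lra.
Qed.

Lemma xflow_link1_cost t : 0 < fst (xf t) -> fst (xf t) ^ d + fst t <= K + snd t.
Proof.
  generalize (xflow_IsWE t); generalize (xf t) as x.
  intros [x1 x2] [_ [H _]]; unfold lat1, lat2 in *; simpl in *. exact H.
Qed.

Lemma xflow_link2_cost t : 0 < snd (xf t) -> K + snd t <= fst (xf t) ^ d + fst t.
Proof.
  generalize (xflow_IsWE t); generalize (xf t) as x.
  intros [x1 x2] [_ [_ H]]; unfold lat1, lat2 in *; simpl in *. exact H.
Qed.

End Equilibrium.

Section BestResponse.

Variables (d : nat) (c t1 t2 : R).
Hypothesis d_ge3 : (3 <= d)%nat.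
Hypothesis c_pos : 0 < c.
Hypothesis t1_range : 0 <= t1 <= c.
Hypothesis t2_range : 0 <= t2 <= c.
Hypothesis best1 : forall t1', 0 <= t1' <= c ->
  Profit1 (lat1 d) (lat2 d) (t1', t2) <= Profit1 (lat1 d) (lat2 d) (t1, t2).
Hypothesis best2 : forall t2', 0 <= t2' <= c ->
  Profit2 (lat1 d) (lat2 d) (t1, t2') <= Profit2 (lat1 d) (lat2 d) (t1, t2).

Local Notation D := (INR d).
Local Notation a := ((INR d - 1) / INR d).
Local Notation K := (a ^ d).
Local Notation xf := (xflow (lat1 d) (lat2 d)).
Local Notation u := (fst (xf (t1, t2))).

Let d_pos : (1 <= d)%nat. Proof. lia. Qed.

Let D_ge3 : 3 <= D. Proof. apply ratio_facts, d_ge3. Qed.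
Let a_range : 0 < a < 1. Proof. apply ratio_facts, d_ge3. Qed.
Let D_one_sub_a : D * (1 - a) = 1. Proof. apply ratio_facts, d_ge3. Qed.
Let K_range : 0 < K < 1.
Proof.
  split; [apply pow_lt; lra|].
  apply Rlt_le_trans with (1 ^ d); [apply pow_lt_compat_l; [lra | exact d_pos] | rewrite pow1; lra].
Qed.

Lemma link1_used : 0 < u.
Proof.
  destruct (xflow_feasible d d_pos (t1, t2)) as [[|Hu] _]; [assumption|]. exfalso.
  set (t1' := Rmin c (K / 2)).
  assert (Ht1' : 0 < t1' <= c) by (unfold t1'; split; [apply Rmin_glb_lt | apply Rmin_l]; lra).
  assert (Hpos : 0 < fst (xf (t1', t2))).
  { apply xflow_fst_pos; [exact d_pos|]. simpl. unfold t1'. pose proof (Rmin_r c (K / 2)). lra. }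
  specialize (best1 t1' ltac:(lra)). unfold Profit1 in best1; simpl in best1.
  rewrite <- Hu, Rmult_0_r in best1.
  pose proof (Rmult_lt_0_compat _ _ (proj1 Ht1') Hpos). lra.
Qed.

Lemma link2_used : 0 < snd (xf (t1, t2)).
Proof.
  destruct (xflow_feasible d d_pos (t1, t2)) as [_ [[|Hx] _]]; [assumption|]. exfalso.
  set (t2' := Rmin c ((1 - K) / 2)).
  assert (Ht2' : 0 < t2' <= c) by (unfold t2'; split; [apply Rmin_glb_lt | apply Rmin_l]; lra).
  assert (Hpos : 0 < snd (xf (t1, t2'))).
  { apply xflow_snd_pos; [exact d_pos|]. simpl. unfold t2'. pose proof (Rmin_r c ((1 - K) / 2)). lra. }
  specialize (best2 t2' ltac:(lra)). unfold Profit2 in best2; simpl in best2.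
  rewrite <- Hx, Rmult_0_r in best2.
  pose proof (Rmult_lt_0_compat _ _ (proj1 Ht2') Hpos). lra.
Qed.

Let flow_snd : snd (xf (t1, t2)) = 1 - u.
Proof. destruct (xflow_feasible d d_pos (t1, t2)) as [_ [_ H]]. lra. Qed.

Let flow_range : 0 < u < 1.
Proof. pose proof link1_used. pose proof link2_used. lra. Qed.

Let balance : u ^ d + t1 = K + t2.
Proof.
  pose proof (xflow_link1_cost d d_pos _ link1_used).
  pose proof (xflow_link2_cost d d_pos _ link2_used). simpl in *. lra.
Qed.

Lemma profit1_deviation v : 0 < v < 1 -> 0 <= K + t2 - v ^ d <= c ->
  (K + t2 - v ^ d) * v <= t1 * u.
Proof.
  intros Hv Htoll. specialize (best1 _ Htoll). unfold Profit1 in best1; simpl in best1.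
  rewrite (xflow_interior d d_pos _ v Hv) in best1 by (simpl; ring). exact best1.
Qed.

Lemma profit2_deviation v : 0 < v < 1 -> 0 <= v ^ d + t1 - K <= c ->
  (v ^ d + t1 - K) * (1 - v) <= t2 * (1 - u).
Proof.
  intros Hv Htoll. specialize (best2 _ Htoll). unfold Profit2 in best2; simpl in best2.
  rewrite (xflow_interior d d_pos _ v Hv), flow_snd in best2 by (simpl; ring). exact best2.
Qed.

Let profit1_derivative :
  derivable_pt_lim (fun v => (K + t2 - v ^ d) * v) u (t1 - D * u ^ d).
Proof.
  apply is_derive_Reals. auto_derive; [exact I|].
  pose proof balance as Hb. rewrite <- (pow_pred_mul d u d_pos) in Hb |- *. lra.
Qed.

Let profit2_derivative :
  derivable_pt_lim (fun v => (v ^ d + t1 - K) * (1 - v)) u (D * u ^ (d - 1) * (1 - u) - t2).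
Proof.
  apply is_derive_Reals. auto_derive; [exact I|].
  pose proof balance as Hb. rewrite Nat.sub_1_r. rewrite <- (pow_pred_mul d u d_pos) in Hb |- *. lra.
Qed.

Lemma toll1_ge_markup : t1 < c -> D * u ^ d <= t1.
Proof.
  intros Hc. cut (0 <= t1 - D * u ^ d); [lra|].
  set (e := Rmin u ((c - t1) / D)).
  assert (He : 0 < e) by (apply Rmin_glb_lt; [lra | apply Rdiv_lt_0_compat; lra]).
  apply (derive_nonneg_of_left_max _ _ _ e profit1_derivative He).
  intros h Hh. unfold e in Hh. pose proof (Rmin_l u ((c - t1) / D)). pose proof (Rmin_r u ((c - t1) / D)).
  destruct (pow_step_bounds d (u - h) u (c - t1) d_pos ltac:(lra) ltac:(lra) ltac:(lra)).
  replace ((K + t2 - u ^ d) * u) with (t1 * u) by (apply Rmult_eq_compat_r; lra).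
  apply profit1_deviation; lra.
Qed.

Lemma toll1_le_markup : t1 <= D * u ^ d.
Proof.
  destruct (Req_dec t1 0) as [->|Ht1].
  { apply Rmult_le_pos; [lra | apply pow_le; lra]. }
  cut (t1 - D * u ^ d <= 0); [lra|].
  set (e := Rmin (1 - u) (t1 / D)).
  assert (He : 0 < e) by (apply Rmin_glb_lt; [lra | apply Rdiv_lt_0_compat; lra]).
  apply (derive_nonpos_of_right_max _ _ _ e profit1_derivative He).
  intros h Hh. unfold e in Hh. pose proof (Rmin_l (1 - u) (t1 / D)). pose proof (Rmin_r (1 - u) (t1 / D)).
  destruct (pow_step_bounds d u (u + h) t1 d_pos ltac:(lra) ltac:(lra) ltac:(lra)).
  replace ((K + t2 - u ^ d) * u) with (t1 * u) by (apply Rmult_eq_compat_r; lra).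
  apply profit1_deviation; lra.
Qed.

Lemma toll2_ge_markup : t2 < c -> D * u ^ (d - 1) * (1 - u) <= t2.
Proof.
  intros Hc. cut (D * u ^ (d - 1) * (1 - u) - t2 <= 0); [lra|].
  set (e := Rmin (1 - u) ((c - t2) / D)).
  assert (He : 0 < e) by (apply Rmin_glb_lt; [lra | apply Rdiv_lt_0_compat; lra]).
  apply (derive_nonpos_of_right_max _ _ _ e profit2_derivative He).
  intros h Hh. unfold e in Hh.
  pose proof (Rmin_l (1 - u) ((c - t2) / D)). pose proof (Rmin_r (1 - u) ((c - t2) / D)).
  destruct (pow_step_bounds d u (u + h) (c - t2) d_pos ltac:(lra) ltac:(lra) ltac:(lra)).
  replace ((u ^ d + t1 - K) * (1 - u)) with (t2 * (1 - u)) by (apply Rmult_eq_compat_r; lra).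
  apply profit2_deviation; lra.
Qed.

Lemma toll2_le_markup : t2 <= D * u ^ (d - 1) * (1 - u).
Proof.
  destruct (Req_dec t2 0) as [->|Ht2].
  { apply Rmult_le_pos; [apply Rmult_le_pos; [lra | apply pow_le] |]; lra. }
  cut (0 <= D * u ^ (d - 1) * (1 - u) - t2); [lra|].
  set (e := Rmin u (t2 / D)).
  assert (He : 0 < e) by (apply Rmin_glb_lt; [lra | apply Rdiv_lt_0_compat; lra]).
  apply (derive_nonneg_of_left_max _ _ _ e profit2_derivative He).
  intros h Hh. unfold e in Hh. pose proof (Rmin_l u (t2 / D)). pose proof (Rmin_r u (t2 / D)).
  destruct (pow_step_bounds d (u - h) u t2 d_pos ltac:(lra) ltac:(lra) ltac:(lra)).
  replace ((u ^ d + t1 - K) * (1 - u)) with (t2 * (1 - u)) by (apply Rmult_eq_compat_r; lra).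
  apply profit2_deviation; lra.
Qed.

(* At the toll t1 - K link 2 carries the whole demand. *)
Lemma link2_undercut : K <= t1 -> t1 - K <= t2 * (1 - u).
Proof.
  intros HK. assert (Htoll : 0 <= t1 - K <= c) by lra.
  specialize (best2 _ Htoll). unfold Profit2 in best2; simpl in best2.
  rewrite (xflow_eq d d_pos _ (0, 1)), flow_snd in best2
    by (apply IsWE_link2_only; [exact d_pos | simpl; lra]).
  simpl in best2. lra.
Qed.

Lemma K_lt_of_a_le v : a <= v ->
  K < v ^ (d - 1) * ((2 * D + 1) * v - D).
Proof.
  intros Hv. rewrite <- (pow_pred_mul d a d_pos), <- Nat.sub_1_r.
  assert (Hq : 0 < a ^ (d - 1)) by (apply pow_lt; lra).
  assert (a ^ (d - 1) <= v ^ (d - 1)) by (apply pow_incr; lra).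
  assert (a < (2 * D + 1) * a - D) by nra.
  assert (a ^ (d - 1) * a < a ^ (d - 1) * ((2 * D + 1) * a - D)) by (apply Rmult_lt_compat_l; lra).
  assert (a ^ (d - 1) * ((2 * D + 1) * a - D) <= v ^ (d - 1) * ((2 * D + 1) * v - D))
    by (apply Rmult_le_compat; nra).
  lra.
Qed.

Let u_pow_d : u ^ (d - 1) * u = u ^ d.
Proof. rewrite Nat.sub_1_r. apply pow_pred_mul, d_pos. Qed.

Lemma a_le_flow_of_toll2_ge_markup : D * u ^ (d - 1) * (1 - u) <= t2 -> a <= u.
Proof.
  intros Hfoc. destruct (Rle_dec a u) as [|Hua]; [assumption|]. exfalso.
  assert (Hp : 0 < u ^ (d - 1)) by (apply pow_lt; lra).
  assert (Hgt : u ^ (d - 1) < t2).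
  { assert (1 < D * (1 - u)) by nra. nra. }
  assert (Hu : u ^ d <= t2) by nra.
  pose proof (link2_undercut ltac:(lra)) as Hcut.
  rewrite Rmult_minus_distr_l, Rmult_1_r in Hcut.
  assert (t2 <= u ^ (d - 1)) by (apply (Rmult_le_reg_r u); lra).
  lra.
Qed.

Lemma toll1_at_cap : t1 = c.
Proof.
  destruct (Rle_lt_or_eq_dec t1 c (proj2 t1_range)) as [Hc|]; [exfalso|assumption].
  pose proof (toll1_ge_markup Hc). pose proof toll1_le_markup. pose proof toll2_le_markup.
  assert (Ha : a <= u).
  { destruct (Rle_lt_or_eq_dec t2 c (proj2 t2_range)) as [Hc2|Hc2].
    - apply a_le_flow_of_toll2_ge_markup, toll2_ge_markup, Hc2.
    - destruct (Rle_dec a u) as [|Hua]; [assumption|].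
      pose proof (pow_lt_compat_l d u a ltac:(lra) d_pos). lra. }
  pose proof (K_lt_of_a_le u Ha). nra.
Qed.

Lemma toll2_at_cap : t2 = c.
Proof.
  destruct (Rle_lt_or_eq_dec t2 c (proj2 t2_range)) as [Hc|]; [exfalso|assumption].
  pose proof (a_le_flow_of_toll2_ge_markup (toll2_ge_markup Hc)).
  pose proof (pow_incr a u d ltac:(lra)). pose proof toll1_at_cap. lra.
Qed.

Lemma flow_at_cap : u = a.
Proof.
  pose proof toll1_at_cap. pose proof toll2_at_cap.
  destruct (Rtotal_order u a) as [Hlt|[Heq|Hgt]]; [exfalso | exact Heq | exfalso].
  - pose proof (pow_lt_compat_l d u a ltac:(lra) d_pos). lra.
  - pose proof (pow_lt_compat_l d a u ltac:(lra) d_pos). lra.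
Qed.

Lemma cap_le_a_pow : c <= a ^ (d - 1).
Proof.
  rewrite <- toll2_at_cap. pose proof toll2_le_markup as Hfoc. rewrite flow_at_cap in Hfoc.
  replace (D * a ^ (d - 1) * (1 - a)) with (a ^ (d - 1) * (D * (1 - a))) in Hfoc by ring.
  rewrite D_one_sub_a in Hfoc. lra.
Qed.

End BestResponse.

Section EqualTolls.

Variables (d : nat) (c : R).
Hypothesis d_ge3 : (3 <= d)%nat.
Hypothesis c_range : 0 <= c <= ((INR d - 1) / INR d) ^ (d - 1).

Local Notation D := (INR d).
Local Notation a := ((INR d - 1) / INR d).
Local Notation K := (a ^ d).
Local Notation xf := (xflow (lat1 d) (lat2 d)).

Let d_pos : (1 <= d)%nat. Proof. lia. Qed.
Let D_ge3 : 3 <= D. Proof. apply ratio_facts, d_ge3. Qed.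
Let a_range : 0 < a < 1. Proof. apply ratio_facts, d_ge3. Qed.
Let D_one_sub_a : D * (1 - a) = 1. Proof. apply ratio_facts, d_ge3. Qed.
Let K_eq : a ^ (d - 1) * a = K.
Proof. rewrite Nat.sub_1_r. apply pow_pred_mul, d_pos. Qed.

Lemma xflow_equal_tolls t : xf (t, t) = (a, 1 - a).
Proof. apply xflow_interior; [exact d_pos | lra | simpl; ring]. Qed.

Lemma link1_deviation_bound y : a <= y -> (K + c - y ^ d) * y <= c * a.
Proof.
  intros Hy. pose proof (pow_tangent_le d y a ltac:(lra) ltac:(lra)) as Ht.
  rewrite S_INR in Ht. rewrite <- !tech_pow_Rmult in Ht.
  assert (c * (y - a) <= a ^ (d - 1) * (y - a)) by (apply Rmult_le_compat_r; lra).
  assert (0 <= a ^ (d - 1) * (y - a)) by (apply Rmult_le_pos; [apply pow_le|]; lra).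
  nra.
Qed.

Lemma link2_deviation_bound y : 0 <= y <= a -> (y ^ d + c - K) * (1 - y) <= c * (1 - a).
Proof.
  intros Hy. pose proof (pow_mul_one_sub_le (d - 1) y (proj1 Hy)) as Hphi.
  rewrite minus_INR in Hphi by lia. simpl INR in Hphi.
  replace ((D - 1) / (D - 1 + 1)) with a in Hphi by (field; lra).
  rewrite <- (pow_pred_mul d y d_pos), <- Nat.sub_1_r.
  assert (c * (a - y) <= a ^ (d - 1) * (a - y)) by (apply Rmult_le_compat_r; lra).
  assert (y * (y ^ (d - 1) * (1 - y)) <= y * (a ^ (d - 1) * (1 - a))) by (apply Rmult_le_compat_l; lra).
  nra.
Qed.

Lemma InT_equal_tolls : InT (lat1 d) (lat2 d) c (c, c).
Proof.
  repeat split; simpl; try lra; intros t' Ht'; unfold Profit1, Profit2; simpl;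
    rewrite xflow_equal_tolls; simpl.
  - destruct (xflow_feasible d d_pos (t', c)) as [Hy0 _].
    destruct (Rle_dec (fst (xf (t', c))) a) as [Hy|Hy].
    + apply Rmult_le_compat; lra.
    + pose proof (xflow_link1_cost d d_pos (t', c) ltac:(lra)) as Hcost; simpl in Hcost.
      pose proof (link1_deviation_bound (fst (xf (t', c))) ltac:(lra)).
      assert (t' * fst (xf (t', c)) <= (K + c - fst (xf (t', c)) ^ d) * fst (xf (t', c)))
        by (apply Rmult_le_compat_r; lra).
      lra.
  - destruct (xflow_feasible d d_pos (c, t')) as [Hy0 [Hy1 Hsum]].
    destruct (Rle_dec a (fst (xf (c, t')))) as [Hy|Hy].
    + apply Rmult_le_compat; lra.
    + pose proof (xflow_link2_cost d d_pos (c, t') ltac:(lra)) as Hcost; simpl in Hcost.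
      pose proof (link2_deviation_bound (fst (xf (c, t'))) ltac:(lra)).
      replace (snd (xf (c, t'))) with (1 - fst (xf (c, t'))) by lra.
      assert (t' * (1 - fst (xf (c, t'))) <= (fst (xf (c, t')) ^ d + c - K) * (1 - fst (xf (c, t'))))
        by (apply Rmult_le_compat_r; lra).
      lra.
Qed.

End EqualTolls.

Lemma InT_iff d c t : (3 <= d)%nat -> 0 <= c ->
  InT (lat1 d) (lat2 d) c t <-> t = (c, c) /\ c <= ((INR d - 1) / INR d) ^ (d - 1).
Proof.
  intros Hd Hc. split.
  - destruct t as [t1 t2]. intros [Ht1 [Ht2 [Hbest1 Hbest2]]]; simpl in *.
    destruct (Req_dec c 0) as [->|Hc0].
    + split; [f_equal; lra|]. apply pow_le, Rlt_le, ratio_facts, Hd.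
    + assert (Hcpos : 0 < c) by lra.
      rewrite (toll1_at_cap d c t1 t2), (toll2_at_cap d c t1 t2); try assumption.
      split; [reflexivity | exact (cap_le_a_pow d c t1 t2 Hd Hcpos Ht1 Ht2 Hbest1 Hbest2)].
  - intros [-> Hcap]. apply InT_equal_tolls; [exact Hd | lra].
Qed.

Definition split_cost (d : nat) (y : R) : R := y ^ d * y + ((INR d - 1) / INR d) ^ d * (1 - y).

Lemma Cost_split d x : Feasible x -> Cost (lat1 d) (lat2 d) x = split_cost d (fst x).
Proof.
  destruct x as [x1 x2]. intros [_ [_ Hsum]]. unfold Cost, split_cost, lat1, lat2; simpl in *.
  replace x2 with (1 - x1) by lra. ring.
Qed.

Lemma Rpower_succ_div x N : 0 < x -> N <> 0 -> Rpower x ((N + 1) / N) = x * Rpower x (/ N).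
Proof.
  intros Hx HN. rewrite <- (Rpower_1 x) at 2 by exact Hx. rewrite <- Rpower_plus.
  f_equal. field. exact HN.
Qed.

Section Optimum.

Variable d : nat.
Hypothesis d_ge3 : (3 <= d)%nat.

Local Notation D := (INR d).
Local Notation a := ((INR d - 1) / INR d).
Local Notation K := (a ^ d).
Local Notation r := (Rpower (INR d + 1) (/ INR d)).
Local Notation xs := ((INR d - 1) / (INR d * Rpower (INR d + 1) (/ INR d))).

Let D_ge3 : 3 <= D. Proof. apply ratio_facts, d_ge3. Qed.
Let a_range : 0 < a < 1. Proof. apply ratio_facts, d_ge3. Qed.

Lemma root_pow : r ^ d = D + 1.
Proof.
  rewrite <- Rpower_pow by apply exp_pos. rewrite Rpower_mult, Rinv_l by lra.
  apply Rpower_1; lra.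
Qed.

Lemma root_gt1 : 1 < r.
Proof.
  destruct (Rlt_dec 1 r) as [|Hr%Rnot_lt_le]; [assumption|]. exfalso.
  pose proof (pow_incr r 1 d (conj (Rlt_le _ _ (exp_pos _)) Hr)).
  rewrite pow1, root_pow in *. lra.
Qed.

Lemma xs_range : 0 < xs < 1.
Proof.
  pose proof root_gt1. replace xs with (a / r) by (field; split; lra).
  split; [apply Rdiv_lt_0_compat; lra|].
  apply (Rmult_lt_reg_r r); [lra|]. unfold Rdiv. rewrite Rmult_assoc, Rinv_l; lra.
Qed.

Lemma xs_marginal_cost : (D + 1) * xs ^ d = K.
Proof.
  pose proof root_gt1. replace xs with (a * / r) by (field; split; lra).
  rewrite Rpow_mult_distr, pow_inv, root_pow. field. lra.
Qed.

Lemma split_cost_gap y : 0 <= y ->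
  split_cost d y - split_cost d xs = y ^ S d - (xs ^ S d + INR (S d) * xs ^ d * (y - xs)).
Proof.
  intros Hy. unfold split_cost. rewrite <- xs_marginal_cost, S_INR. simpl pow. ring.
Qed.

Lemma IsOpt_xstar : IsOpt (lat1 d) (lat2 d) (xs, 1 - xs).
Proof.
  pose proof xs_range. split; [unfold Feasible; simpl; lra|].
  intros y Hy. rewrite !Cost_split by (try exact Hy; unfold Feasible; simpl; lra).
  destruct Hy as [Hy _]. pose proof (split_cost_gap _ Hy).
  pose proof (pow_tangent_le d (fst y) xs Hy ltac:(lra)). simpl fst. lra.
Qed.

Lemma IsOpt_unique x : IsOpt (lat1 d) (lat2 d) x -> x = (xs, 1 - xs).
Proof.
  intros [Hx Hopt]. pose proof xs_range.
  assert (Hxs : Feasible (xs, 1 - xs)) by (unfold Feasible; simpl; lra).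
  specialize (Hopt _ Hxs). rewrite !Cost_split in Hopt by assumption.
  destruct x as [x1 x2], Hx as [Hx1 [_ Hsum]]; simpl in *.
  destruct (Req_dec x1 xs) as [->|Hne]; [f_equal; lra|]. exfalso.
  pose proof (split_cost_gap _ Hx1). set (y := xs) in *. destruct d as [|k]; [lia|].
  pose proof (pow_tangent_lt k x1 y Hx1 ltac:(lra) Hne). lra.
Qed.

Lemma split_cost_a : split_cost d a = K.
Proof. unfold split_cost. ring. Qed.

Lemma cost_ratio_equal_tolls :
  Cost (lat1 d) (lat2 d) (a, 1 - a) / Cost (lat1 d) (lat2 d) (xs, 1 - xs) =
  Rpower (D + 1) ((D + 1) / D) / (Rpower (D + 1) ((D + 1) / D) - (D - 1)).
Proof.
  pose proof root_gt1. pose proof xs_range.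
  rewrite !Cost_split by (unfold Feasible; simpl; lra). simpl fst.
  assert (HK : 0 < K) by (apply pow_lt; lra).
  rewrite Rpower_succ_div by lra.
  rewrite split_cost_a. unfold split_cost.
  replace (xs ^ d) with (K / (D + 1)) by (rewrite <- xs_marginal_cost; field; lra).
  assert (0 < D * r - (D - 1)) by nra.
  assert (0 < K * (D * r - (D - 1)) * (D + 1)) by (apply Rmult_lt_0_compat; [apply Rmult_lt_0_compat|]; lra).
  assert (0 < K * (D - 1)) by (apply Rmult_lt_0_compat; lra).
  field. repeat split; lra.
Qed.

End Optimum.

Lemma IsInfSup_const (P : R -> tolls -> Prop) f V :
  (exists t, P 0 t) -> (forall c t, 0 <= c -> P c t -> f t = V) -> IsInfSup P f V.
Proof.
  intros Hne Hval. split.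
  - intros c Hc W [[t Ht] Hle]. rewrite <- (Hval c t Hc Ht). apply Hle, Ht.
  - intros W HW. exists 0. split; [lra|]. split; [exact Hne|].
    intros t Ht. rewrite (Hval 0 t (Rle_refl 0) Ht). lra.
Qed.

Lemma pow_one_add_ge k y : 0 <= y ->
  1 + INR k * y + INR k * (INR k - 1) / 2 * (y * y) <= (1 + y) ^ k.
Proof.
  intros Hy. induction k as [|k IH]; [simpl; lra|].
  rewrite S_INR, <- tech_pow_Rmult.
  assert (Hk : 0 <= INR k * (INR k - 1)).
  { destruct k as [|k]; [simpl; lra|]. pose proof (pos_INR k). rewrite S_INR. nra. }
  assert ((1 + y) * (1 + INR k * y + INR k * (INR k - 1) / 2 * (y * y)) <= (1 + y) * (1 + y) ^ k)
    by (apply Rmult_le_compat_l; lra).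
  assert (0 <= INR k * (INR k - 1) * (y * y * y)) by (apply Rmult_le_pos; [exact Hk | nra]).
  pose proof (pos_INR k). nra.
Qed.

Lemma root_le_one_add_two_div_sqrt d : (3 <= d)%nat -> Rpower (INR d + 1) (/ INR d) <= 1 + 2 / sqrt (INR d).
Proof.
  intros Hd. destruct (ratio_facts d Hd) as [HD _].
  set (s := sqrt (INR d)). set (y := 2 / s).
  assert (Hs : s * s = INR d) by (apply sqrt_sqrt; lra).
  assert (Hs0 : 0 < s) by (apply sqrt_lt_R0; lra).
  assert (Hy : 0 <= y) by (unfold y; apply Rlt_le, Rdiv_lt_0_compat; lra).
  destruct (Rle_dec (Rpower (INR d + 1) (/ INR d)) (1 + y)) as [|Hr%Rnot_le_lt]; [assumption|].
  exfalso. pose proof (pow_lt_compat_l d (1 + y) (Rpower (INR d + 1) (/ INR d)) ltac:(lra) ltac:(lia)) as Hlt.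
  rewrite root_pow in Hlt by exact Hd.
  pose proof (pow_one_add_ge d y Hy) as Hge.
  replace (INR d * (INR d - 1) / 2 * (y * y)) with (2 * (INR d - 1)) in Hge
    by (unfold y; rewrite <- Hs; field; lra).
  assert (0 <= INR d * y) by (apply Rmult_le_pos; lra).
  lra.
Qed.

Lemma ratio_ge_sqrt d : (3 <= d)%nat ->
  sqrt (INR d) / 6 <=
  Rpower (INR d + 1) ((INR d + 1) / INR d) / (Rpower (INR d + 1) ((INR d + 1) / INR d) - (INR d - 1)).
Proof.
  intros Hd. destruct (ratio_facts d Hd) as [HD _].
  pose proof (root_gt1 d Hd). pose proof (root_le_one_add_two_div_sqrt d Hd).
  rewrite Rpower_succ_div by lra.
  set (r := Rpower (INR d + 1) (/ INR d)) in *. set (s := sqrt (INR d)) in *.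
  assert (Hs : s * s = INR d) by (apply sqrt_sqrt; lra).
  assert (Hs1 : 1 < s) by (rewrite <- sqrt_1; apply sqrt_lt_1; lra).
  assert (Hden : (INR d + 1) * r - (INR d - 1) <= 6 * s).
  { assert ((INR d + 1) * r <= (INR d + 1) * (1 + 2 / s)) by (apply Rmult_le_compat_l; lra).
    replace ((INR d + 1) * (1 + 2 / s)) with (INR d + 1 + 2 * s + 2 / s) in * by (rewrite <- Hs; field; lra).
    assert (2 / s <= 2) by (apply (Rmult_le_reg_r s); [lra|]; unfold Rdiv; rewrite Rmult_assoc, Rinv_l; lra).
    lra. }
  assert (Hpos : 0 < (INR d + 1) * r - (INR d - 1)) by nra.
  apply (Rmult_le_reg_r ((INR d + 1) * r - (INR d - 1))); [exact Hpos|].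
  unfold Rdiv at 2. rewrite Rmult_assoc, Rinv_l, Rmult_1_r by lra.
  assert (s / 6 * ((INR d + 1) * r - (INR d - 1)) <= s / 6 * (6 * s)) by (apply Rmult_le_compat_l; lra).
  nra.
Qed.

Lemma ratio_cv_infty : cv_infty (fun d : nat =>
  Rpower (INR d + 1) ((INR d + 1) / INR d) / (Rpower (INR d + 1) ((INR d + 1) / INR d) - (INR d - 1))).
Proof.
  intros M. destruct (INR_unbounded (36 * (M * M) + 3)) as [N HN].
  exists N. intros d Hd. apply le_INR in Hd.
  assert (H3 : (3 <= d)%nat).
  { destruct (Compare_dec.le_lt_dec 3 d) as [|Hlt]; [assumption|].
    assert (INR d <= INR 2) by (apply le_INR; lia). simpl in *. nra. }
  apply Rlt_le_trans with (sqrt (INR d) / 6); [|apply ratio_ge_sqrt, H3].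
  destruct (Rlt_dec M 0) as [|HM]; [pose proof (sqrt_pos (INR d)); lra|].
  assert (6 * M < sqrt (INR d)).
  { rewrite <- (sqrt_square (6 * M)) by lra. apply sqrt_lt_1; nra. }
  lra.
Qed.

Theorem mainTheorem16 :
  (forall d : nat, (3 <= d)%nat ->
    let a := (INR d - 1) / INR d in
    let xstar1 := (INR d - 1) / (INR d * Rpower (INR d + 1) (/ INR d)) in
    let xstar : flow := (xstar1, 1 - xstar1) in
    let V := Rpower (INR d + 1) ((INR d + 1) / INR d) /
             (Rpower (INR d + 1) ((INR d + 1) / INR d) - (INR d - 1)) in
    (forall c, 0 <= c ->
       ((exists t, InT (lat1 d) (lat2 d) c t) <-> c <= a ^ (d - 1))) /\
    (forall c, 0 <= c -> c <= a ^ (d - 1) ->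
       (forall t, InT (lat1 d) (lat2 d) c t <-> t = (c, c)) /\
       xflow (lat1 d) (lat2 d) (c, c) = (a, 1 / INR d) /\
       xflow (lat1 d) (lat2 d) (0, 0) = (a, 1 / INR d)) /\
    IsOpt (lat1 d) (lat2 d) xstar /\
    (forall x, IsOpt (lat1 d) (lat2 d) x -> x = xstar) /\
    IsInfSup (InT (lat1 d) (lat2 d))
      (fun t => Cost (lat1 d) (lat2 d) (xflow (lat1 d) (lat2 d) t)
                / Cost (lat1 d) (lat2 d) xstar) V) /\
  cv_infty (fun d : nat =>
    Rpower (INR d + 1) ((INR d + 1) / INR d) /
    (Rpower (INR d + 1) ((INR d + 1) / INR d) - (INR d - 1))).
Proof.
  split; [|exact ratio_cv_infty].
  intros d Hd a xstar1 xstar V.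
  assert (Hflow : forall t, xflow (lat1 d) (lat2 d) (t, t) = (a, 1 / INR d)).
  { intros t. rewrite xflow_equal_tolls by exact Hd. destruct (ratio_facts d Hd) as [HD _].
    f_equal. unfold a. field. lra. }
  split; [|split; [|split; [|split]]].
  - intros c Hc. split.
    + intros [t Ht]. apply (InT_iff d c t Hd Hc), Ht.
    + intros Hcap. exists (c, c). apply InT_iff; auto.
  - intros c Hc Hcap. split; [|split; apply Hflow].
    intros t. rewrite InT_iff by assumption. tauto.
  - apply IsOpt_xstar, Hd.
  - apply IsOpt_unique, Hd.
  - apply IsInfSup_const.
    + exists (0, 0). apply InT_iff; [exact Hd | lra |].
      split; [reflexivity | apply pow_le, Rlt_le, ratio_facts, Hd].
    + intros c t Hc Ht. apply (InT_iff d c t Hd Hc) in Ht as [-> _].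
      rewrite xflow_equal_tolls by exact Hd. apply cost_ratio_equal_tolls, Hd.
Qed.
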